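(* If $X_1,\dots,X_m$ ($m\ge2$) are isentropic, then the source $X_{\mathcal M}$ is Type $\mathcal S$; that is, the singleton partition $\mathcal S$ attains $\min_{\mathcal P}\Delta(\mathcal P)$.
   Context: Let $\mathcal M=\{1,\dots,m\}$, and let $X_{\mathcal M}$ be jointly distributed finite-valued random variables, with $X_A=(X_i:i\in A)$. $X_1,\dots,X_m$ are isentropic if $H(X_A)=H(X_B)$ for all nonempty $A,B\subseteq\mathcal M$ with $|A|=|B|$. For a partition $\mathcal P$ of $\mathcal M$ with $|\mathcal P|\ge2$, $\Delta(\mathcal P)=\frac1{|\mathcal P|-1}[\sum_{A\in\mathcal P}H(X_A)-H(X_{\mathcal M})]$. $\mathcal S=\{\{1\},\dots,\{m\}\}$, and the source is Type $\mathcal S$ if $\mathcal S$ minimizes $\Delta$ over all partitions with at least two cells. *)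

From Stdlib Require Import Reals List Arith Bool.
Import ListNotations.
Open Scope R_scope.

(* A finite joint distribution of X_0,...,X_{m-1}: a finite list of atoms
   (probability, outcome), where outcome i is the value of X_i (encoded in nat).
   Every jointly distributed finite-valued family can be encoded this way. *)
Definition jdist := list (R * (nat -> nat)).

Definition sumR (l : list R) : R := fold_right Rplus 0 l.

Definition valid (d : jdist) : Prop :=
  Forall (fun a => 0 <= fst a) d /\ sumR (map fst d) = 1.

(* subsets of M = {0,...,m-1} are boolean predicates (only i < m matter) *)
Definition agree (m : nat) (A : nat -> bool) (f g : nat -> nat) : bool :=
  forallb (fun i => implb (A i) (Nat.eqb (f i) (g i))) (seq 0 m).

Definition prob (m : nat) (d : jdist) (A : nat -> bool) (f : nat -> nat) : R :=
  sumR (map (fun a => if agree m A (snd a) f then fst a else 0) d).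

(* Shannon entropy H(X_A) = - sum_v P(X_A=v) ln P(X_A=v)
   written as the expectation -E[ln P(X_A = X_A(omega))]; atoms of
   probability 0 contribute 0. *)
Definition H (m : nat) (d : jdist) (A : nat -> bool) : R :=
  - sumR (map (fun a => fst a * ln (prob m d A (snd a))) d).

Definition card (m : nat) (A : nat -> bool) : nat := length (filter A (seq 0 m)).

Definition isentropic (m : nat) (d : jdist) : Prop :=
  forall A B : nat -> bool,
    (0 < card m A)%nat -> card m A = card m B -> H m d A = H m d B.

(* A partition of M into k cells, given by a surjective labelling c : M -> {0..k-1};
   cell j = c^{-1}(j). *)
Definition is_partition (m k : nat) (c : nat -> nat) : Prop :=
  (forall i, (i < m)%nat -> (c i < k)%nat) /\
  (forall j, (j < k)%nat -> exists i, (i < m)%nat /\ c i = j).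

Definition cell (c : nat -> nat) (j : nat) : nat -> bool := fun i => Nat.eqb (c i) j.

Definition Delta (m : nat) (d : jdist) (k : nat) (c : nat -> nat) : R :=
  (sumR (map (fun j => H m d (cell c j)) (seq 0 k)) - H m d (fun _ => true))
  / INR (k - 1).

(* singleton partition S: k = m, c = identity *)
Definition TypeS (m : nat) (d : jdist) : Prop :=
  forall (k : nat) (c : nat -> nat), is_partition m k c -> (2 <= k)%nat ->
    Delta m d m (fun i => i) <= Delta m d k c.

From Pilot Require Import Defs.
From Stdlib Require Import Reals List Bool Lra Lia.
Open Scope R_scope.

(* Entropy is submodular, H(A ∪ B) + H(A ∩ B) <= H(A) + H(B): by ln x <= x - 1
   it suffices that sum_x p(x) p(x_A) p(x_B) / (p(x_{A∪B}) p(x_{A∩B})) <= 1.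
   Under isentropy H(X_A) = g(|A|), and submodularity applied to two
   overlapping (s+1)-sets makes g concave on {1,...,m}, hence
   (m-1) g(n) >= (m-n) g(1) + (n-1) g(m).  Summing this over the cells of a
   k-cell partition P gives
   (m-1) sum_A H(X_A) >= k (m g(1) - g(m)) + m (g(m) - g(1)),
   which rearranges to Delta(P) >= Delta(S) = (m g(1) - g(m)) / (m-1). *)

Section FiniteSums.
Context {T : Type}.
Implicit Types (l : list T) (f g : T -> R).

Lemma sumR_map_ext l f g :
  (forall x, In x l -> f x = g x) -> sumR (map f l) = sumR (map g l).
Proof. induction l as [|a l IH]; simpl; intros Hfg; [reflexivity|]. rewrite Hfg, IH; auto. Qed.

Lemma sumR_map_le l f g :
  (forall x, In x l -> f x <= g x) -> sumR (map f l) <= sumR (map g l).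
Proof. induction l as [|a l IH]; simpl; intros Hfg; [lra|]. apply Rplus_le_compat; auto. Qed.

Lemma sumR_map_nonneg l f : (forall x, In x l -> 0 <= f x) -> 0 <= sumR (map f l).
Proof. induction l as [|a l IH]; simpl; intros Hf; [lra|]. apply Rplus_le_le_0_compat; auto. Qed.

Lemma sumR_map_add l f g :
  sumR (map (fun x => f x + g x) l) = sumR (map f l) + sumR (map g l).
Proof. induction l as [|a l IH]; simpl; lra. Qed.

Lemma sumR_map_sub l f g :
  sumR (map (fun x => f x - g x) l) = sumR (map f l) - sumR (map g l).
Proof. induction l as [|a l IH]; simpl; lra. Qed.

Lemma sumR_map_mult_l l c f : sumR (map (fun x => c * f x) l) = c * sumR (map f l).
Proof. induction l as [|a l IH]; simpl; rewrite ?IH; ring. Qed.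

Lemma sumR_map_mult_r l c f : sumR (map (fun x => f x * c) l) = sumR (map f l) * c.
Proof. induction l as [|a l IH]; simpl; rewrite ?IH; ring. Qed.

Lemma sumR_map_const l c : sumR (map (fun _ => c) l) = INR (length l) * c.
Proof. induction l as [|a l IH]; simpl length; rewrite ?S_INR; simpl; rewrite ?IH; ring. Qed.

Lemma sumR_map_ge_term l f a :
  In a l -> (forall x, In x l -> 0 <= f x) -> f a <= sumR (map f l).
Proof.
  induction l as [|b l IH]; simpl; intros Ha Hf; [contradiction|].
  assert (0 <= sumR (map f l)) by (apply sumR_map_nonneg; auto).
  assert (0 <= f b) by auto.
  destruct Ha as [<-|Ha]; [lra|]. assert (f a <= sumR (map f l)) by auto. lra.
Qed.

End FiniteSums.

Lemma sumR_map_exchange {A B} (l1 : list A) (l2 : list B) (f : A -> B -> R) :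
  sumR (map (fun a => sumR (map (fun b => f a b) l2)) l1) =
  sumR (map (fun b => sumR (map (fun a => f a b) l1)) l2).
Proof.
  induction l1 as [|a l1 IH]; simpl.
  - induction l2 as [|b l2 IH2]; simpl; [reflexivity|]. rewrite <- IH2; ring.
  - rewrite IH, sumR_map_add. reflexivity.
Qed.

Lemma sumR_map_mult {A B} (l1 : list A) (l2 : list B) f g :
  sumR (map f l1) * sumR (map g l2) =
  sumR (map (fun a => sumR (map (fun b => f a * g b) l2)) l1).
Proof.
  rewrite <- sumR_map_mult_r. apply sumR_map_ext. intros a _.
  rewrite sumR_map_mult_l. reflexivity.
Qed.

Lemma Rinv_nonneg x : 0 <= x -> 0 <= / x.
Proof.
  intros Hx. destruct (Req_dec x 0) as [->|Hne]; [rewrite Rinv_0; lra|].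
  left; apply Rinv_0_lt_compat; lra.
Qed.

Lemma Rmult_inv_r_le_1 x : 0 <= x -> x * / x <= 1.
Proof.
  intros Hx. destruct (Req_dec x 0) as [->|Hne]; [rewrite Rinv_0; lra|].
  rewrite Rinv_r; lra.
Qed.

Lemma ln_le_sub_1 x : 0 < x -> ln x <= x - 1.
Proof. intros Hx. assert (Hh := exp_ineq1_le (ln x)). rewrite exp_ln in Hh; lra. Qed.

Lemma ln_ratio_le x y u v : 0 < x -> 0 < y -> 0 < u -> 0 < v ->
  ln x + ln y - (ln u + ln v) <= x * y / (u * v) - 1.
Proof.
  intros Hx Hy Hu Hv.
  assert (Hr : 0 < x * y / (u * v)).
  { unfold Rdiv. apply Rmult_lt_0_compat; [nra|]. apply Rinv_0_lt_compat; nra. }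
  replace (ln x + ln y - (ln u + ln v)) with (ln (x * y / (u * v))).
  - apply ln_le_sub_1, Hr.
  - unfold Rdiv. rewrite ln_mult, ln_mult, ln_Rinv, ln_mult; try lra; try nra.
    apply Rinv_0_lt_compat; nra.
Qed.

Lemma Rdiv_le_cross a b c e : 0 < b -> 0 < e -> a * e <= c * b -> a / b <= c / e.
Proof.
  intros Hb He Hx. unfold Rdiv. apply Rmult_le_reg_r with (b * e); [nra|].
  replace (a * / b * (b * e)) with (a * e) by (field; lra).
  replace (c * / e * (b * e)) with (c * b) by (field; lra). lra.
Qed.

Section Agreement.
Variable m : nat.
Implicit Types (A C : nat -> bool) (f g h : nat -> nat).

Lemma agreeP A f g :
  agree m A f g = true <-> forall i, (i < m)%nat -> A i = true -> f i = g i.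
Proof.
  unfold agree. rewrite forallb_forall. split.
  - intros Hx i Hi HA. specialize (Hx i). rewrite in_seq, HA in Hx.
    apply Nat.eqb_eq, Hx. lia.
  - intros Hx i Hi. rewrite in_seq in Hi.
    destruct (A i) eqn:E; simpl; [|reflexivity]. apply Nat.eqb_eq, Hx; [lia|exact E].
Qed.

Lemma agree_refl A f : agree m A f f = true.
Proof. apply agreeP; auto. Qed.

Lemma agree_sym A f g : agree m A f g = true -> agree m A g f = true.
Proof. rewrite !agreeP. intros Hfg i Hi HA. symmetry; auto. Qed.

Lemma agree_trans A f g h :
  agree m A f g = true -> agree m A g h = true -> agree m A f h = true.
Proof. rewrite !agreeP. intros Hfg Hgh i Hi HA. rewrite Hfg; auto. Qed.

Lemma agree_sub A C f g :
  (forall i, C i = true -> A i = true) -> agree m A f g = true -> agree m C f g = true.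
Proof. rewrite !agreeP. auto. Qed.

Lemma agree_congr_r A f g h : agree m A g h = true -> agree m A f g = agree m A f h.
Proof.
  intros Hgh. destruct (agree m A f g) eqn:E1, (agree m A f h) eqn:E2; auto.
  - rewrite (agree_trans _ _ _ _ E1 Hgh) in E2. discriminate.
  - rewrite (agree_trans _ _ _ _ E2 (agree_sym _ _ _ Hgh)) in E1. discriminate.
Qed.

Lemma prob_agree d A f g : agree m A f g = true -> prob m d A f = prob m d A g.
Proof.
  intros Hfg. unfold prob. apply sumR_map_ext. intros a _.
  rewrite (agree_congr_r _ _ _ _ Hfg). reflexivity.
Qed.

End Agreement.

Section Submodularity.
Variables (m : nat) (d : jdist).
Hypothesis Hnn : forall a, In a d -> 0 <= fst a.
Hypothesis Hsum : sumR (map fst d) = 1.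
Variables A B U C : nat -> bool.
Hypothesis HU : forall i, U i = A i || B i.
Hypothesis HC : forall i, C i = A i && B i.

Lemma prob_nonneg (E : nat -> bool) f : 0 <= prob m d E f.
Proof. apply sumR_map_nonneg. intros a Ha. destruct agree; auto; lra. Qed.

Lemma prob_ge_atom (E : nat -> bool) a : In a d -> fst a <= prob m d E (snd a).
Proof.
  intros Ha.
  assert (Hg := sumR_map_ge_term d
    (fun b => if agree m E (snd b) (snd a) then fst b else 0) a Ha).
  simpl in Hg. rewrite agree_refl in Hg. apply Hg.
  intros x Hx. destruct agree; auto; lra.
Qed.

Lemma prob_mul_inv_le_1 (E : nat -> bool) f : prob m d E f * / prob m d E f <= 1.
Proof. apply Rmult_inv_r_le_1, prob_nonneg. Qed.

(* The atoms agreeing with [f] on [A] and with [f'] on [B] all agree on [U]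
   with the outcome glued from [f] and [f']. *)
Lemma sumR_glued_le_1 f f' :
  sumR (map (fun a => if agree m A f (snd a) && agree m B f' (snd a)
                      then fst a * / prob m d U (snd a) else 0) d) <= 1.
Proof.
  set (z := fun i => if A i then f i else f' i).
  apply Rle_trans with
    (sumR (map (fun a => (if agree m U (snd a) z then fst a else 0) * / prob m d U z) d)).
  - apply sumR_map_le. intros a Ha.
    destruct (agree m A f (snd a)) eqn:EA, (agree m B f' (snd a)) eqn:EB; simpl.
    2-4: apply Rmult_le_pos;
      [destruct (agree m U (snd a) z); auto; lra | apply Rinv_nonneg, prob_nonneg].
    assert (Haz : agree m U (snd a) z = true).
    { apply agreeP. intros i Hi HUi. rewrite agreeP in EA, EB. unfold z.
      rewrite HU in HUi. destruct (A i) eqn:EAi.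
      - symmetry; apply EA; auto.
      - symmetry; apply EB; auto. }
    rewrite Haz, (prob_agree _ _ _ _ _ Haz). lra.
  - rewrite sumR_map_mult_r. apply prob_mul_inv_le_1.
Qed.

(* Expanding [prob A] and [prob B] over atoms [b], [b'], the [(a, b, b')] term
   factors as [X b b' * Y a b b']; summing [Y] over [a] gives at most 1, and
   summing [X] over [b'] gives at most [fst b]. *)
Lemma sumR_prob_ratio_le_1 :
  sumR (map (fun a => fst a * (prob m d A (snd a) * prob m d B (snd a) /
     (prob m d U (snd a) * prob m d C (snd a)))) d) <= 1.
Proof.
  set (X := fun b b' : R * (nat -> nat) =>
    (if agree m C (snd b') (snd b) then fst b' else 0) * (fst b * / prob m d C (snd b))).
  set (Y := fun a b b' : R * (nat -> nat) =>
    if agree m A (snd b) (snd a) && agree m B (snd b') (snd a)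
    then fst a * / prob m d U (snd a) else 0).
  assert (Hexpand : forall a, In a d ->
    fst a * (prob m d A (snd a) * prob m d B (snd a) /
      (prob m d U (snd a) * prob m d C (snd a)))
    = sumR (map (fun b => sumR (map (fun b' => X b b' * Y a b b') d)) d)).
  { intros a Ha.
    transitivity (prob m d A (snd a) * prob m d B (snd a) *
      (fst a / (prob m d U (snd a) * prob m d C (snd a)))); [unfold Rdiv; ring|].
    unfold prob at 1 2. rewrite sumR_map_mult, <- sumR_map_mult_r.
    apply sumR_map_ext. intros b Hb. rewrite <- sumR_map_mult_r.
    apply sumR_map_ext. intros b' Hb'. unfold X, Y.
    destruct (agree m A (snd b) (snd a)) eqn:EA, (agree m B (snd b') (snd a)) eqn:EB;
      simpl; try ring.
    assert (ECa : agree m C (snd b) (snd a) = true).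
    { apply (agree_sub _ A); [intros i; rewrite HC; apply andb_prop|exact EA]. }
    assert (ECb : agree m C (snd b') (snd b) = true).
    { apply (agree_trans _ _ _ (snd a)); [|now apply agree_sym].
      apply (agree_sub _ B); [intros i; rewrite HC; apply andb_prop|exact EB]. }
    rewrite ECb, (prob_agree _ _ _ _ _ ECa). unfold Rdiv. rewrite Rinv_mult. ring. }
  rewrite (sumR_map_ext _ _ _ Hexpand), sumR_map_exchange, <- Hsum.
  apply sumR_map_le. intros b Hb. rewrite sumR_map_exchange.
  apply Rle_trans with (sumR (map (fun b' => X b b') d)).
  - apply sumR_map_le. intros b' Hb'. rewrite sumR_map_mult_l.
    assert (0 <= X b b').
    { apply Rmult_le_pos; [destruct agree; auto; lra|].
      apply Rmult_le_pos; [auto|apply Rinv_nonneg, prob_nonneg]. }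
    assert (Hglued : sumR (map (fun a => Y a b b') d) <= 1) by apply sumR_glued_le_1.
    nra.
  - unfold X. rewrite sumR_map_mult_r. fold (prob m d C (snd b)).
    assert (0 <= fst b) by auto. assert (Hi := prob_mul_inv_le_1 C (snd b)). nra.
Qed.

Lemma entropy_submodular : H m d U + H m d C <= H m d A + H m d B.
Proof.
  assert (Hratio := sumR_prob_ratio_le_1).
  set (P := fun (E : nat -> bool) (a : R * (nat -> nat)) => prob m d E (snd a)) in Hratio.
  assert (Hle : sumR (map (fun a => (fst a * ln (P A a) + fst a * ln (P B a))
      - (fst a * ln (P U a) + fst a * ln (P C a))) d)
    <= sumR (map (fun a => fst a * (P A a * P B a / (P U a * P C a)) - fst a) d)).
  { apply sumR_map_le. intros a Ha. destruct (Rle_lt_or_eq_dec 0 (fst a) (Hnn a Ha)) as [Hpos|<-].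
    - assert (fst a <= P A a /\ fst a <= P B a /\ fst a <= P U a /\ fst a <= P C a)
        by (unfold P; repeat split; apply prob_ge_atom, Ha).
      assert (Hln : ln (P A a) + ln (P B a) - (ln (P U a) + ln (P C a))
        <= P A a * P B a / (P U a * P C a) - 1) by (apply ln_ratio_le; lra).
      assert (Hmul : fst a * (ln (P A a) + ln (P B a) - (ln (P U a) + ln (P C a)))
        <= fst a * (P A a * P B a / (P U a * P C a) - 1)) by (apply Rmult_le_compat_l; lra).
      lra.
    - lra. }
  rewrite sumR_map_sub, !sumR_map_add, sumR_map_sub, Hsum in Hle.
  unfold H, P in *. lra.
Qed.

End Submodularity.

Definition prefix (s : nat) : nat -> bool := fun i => Nat.ltb i s.

Lemma card_INR m (P : nat -> bool) :
  INR (card m P) = sumR (map (fun i => if P i then 1 else 0) (seq 0 m)).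
Proof.
  unfold card. induction (seq 0 m) as [|a l IH]; simpl; [reflexivity|].
  destruct (P a); simpl length; rewrite ?S_INR, IH; ring.
Qed.

Lemma card_le m P : (card m P <= m)%nat.
Proof. unfold card. rewrite <- (length_seq m 0) at 2. apply filter_length_le. Qed.

Lemma card_true m : card m (fun _ => true) = m.
Proof. unfold card. rewrite filter_true, length_seq. reflexivity. Qed.

Lemma card_prefix m s : (s <= m)%nat -> card m (prefix s) = s.
Proof.
  intros Hs. unfold card, prefix.
  replace m with (s + (m - s))%nat by lia. rewrite seq_app, filter_app.
  rewrite (filter_ext_in _ (fun _ => true) (seq 0 s)),
    (filter_ext_in _ (fun _ => false) (seq (0 + s) (m - s))).
  - rewrite filter_true, filter_false, app_nil_r, length_seq. reflexivity.
  - intros i Hi. rewrite in_seq in Hi. apply Nat.ltb_ge. lia.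
  - intros i Hi. rewrite in_seq in Hi. apply Nat.ltb_lt. lia.
Qed.

Lemma card_eqb m j : (j < m)%nat -> card m (fun i => Nat.eqb i j) = 1%nat.
Proof.
  intros Hj. unfold card.
  replace m with (j + S (m - S j))%nat by lia. rewrite seq_app, filter_app. simpl.
  rewrite (filter_ext_in _ (fun _ => false) (seq 0 j)),
    (filter_ext_in _ (fun _ => false) (seq (S j) _)).
  - rewrite !filter_false, Nat.eqb_refl. reflexivity.
  - intros i Hi. rewrite in_seq in Hi. apply Nat.eqb_neq. lia.
  - intros i Hi. rewrite in_seq in Hi. apply Nat.eqb_neq. lia.
Qed.

Lemma card_orb_disjoint m (P Q : nat -> bool) :
  (forall i, P i && Q i = false) -> card m (fun i => P i || Q i) = (card m P + card m Q)%nat.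
Proof.
  intros Hdisj. unfold card. induction (seq 0 m) as [|a l IH]; simpl; [reflexivity|].
  specialize (Hdisj a). destruct (P a), (Q a); simpl in *; try discriminate; lia.
Qed.

Lemma partition_card_sum m k c : is_partition m k c ->
  sumR (map (fun j => INR (card m (cell c j))) (seq 0 k)) = INR m.
Proof.
  intros [Hc _].
  rewrite (sumR_map_ext _ _ (fun j => sumR (map (fun i => if cell c j i then 1 else 0) (seq 0 m))))
    by (intros j _; apply card_INR).
  rewrite sumR_map_exchange, (sumR_map_ext _ _ (fun _ => 1)), sumR_map_const, length_seq; [ring|].
  intros i Hi. rewrite in_seq in Hi. unfold cell.
  rewrite (sumR_map_ext _ _ (fun j => if Nat.eqb j (c i) then 1 else 0))
    by (intros j _; rewrite Nat.eqb_sym; reflexivity).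
  rewrite <- card_INR, card_eqb; [reflexivity|]. apply Hc. lia.
Qed.

Lemma card_cell_pos m k c j : is_partition m k c -> (j < k)%nat -> (0 < card m (cell c j))%nat.
Proof.
  intros [_ Hs] Hj. destruct (Hs j Hj) as [i [Hi Hci]].
  assert (Hin : In i (filter (cell c j) (seq 0 m))).
  { apply filter_In. split; [apply in_seq; lia|]. apply Nat.eqb_eq, Hci. }
  unfold card. destruct (filter (cell c j) (seq 0 m)); [destruct Hin|simpl; lia].
Qed.

Section Chord.
Variables (g : nat -> R) (m : nat).
Hypothesis g_concave :
  forall s, (1 <= s)%nat -> (s + 2 <= m)%nat -> g (s + 2)%nat + g s <= 2 * g (s + 1)%nat.

Let incr s := g (s + 1)%nat - g s.

Lemma incr_antitone n j : (1 <= n)%nat -> (n + j + 1 <= m)%nat -> incr (n + j) <= incr n.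
Proof.
  induction j as [|j IH]; intros Hn Hm; [rewrite Nat.add_0_r; lra|].
  assert (Hc := g_concave (n + j) ltac:(lia) ltac:(lia)).
  assert (IHj := IH Hn ltac:(lia)). unfold incr in *.
  replace (n + S j + 1)%nat with (n + j + 2)%nat by lia.
  replace (n + S j)%nat with (n + j + 1)%nat by lia. lra.
Qed.

Lemma growth_le_incr n k : (1 <= n)%nat -> (n + k <= m)%nat ->
  g (n + k)%nat - g n <= INR k * incr n.
Proof.
  induction k as [|k IH]; intros Hn Hm; [rewrite Nat.add_0_r; simpl; lra|].
  assert (Hd := incr_antitone n k Hn ltac:(lia)). assert (IHk := IH Hn ltac:(lia)).
  unfold incr in *. rewrite S_INR.
  replace (n + S k)%nat with (n + k + 1)%nat by lia. lra.
Qed.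

Lemma growth_ge_incr n : (1 <= n)%nat -> (n + 1 <= m)%nat ->
  (INR n - 1) * incr n <= g n - g 1%nat.
Proof.
  induction n as [|n IH]; intros Hn Hm; [lia|].
  destruct (Nat.eq_dec n 0) as [->|Hn0]; [simpl; lra|].
  assert (IHn := IH ltac:(lia) ltac:(lia)).
  assert (Hd : incr (n + 1) <= incr n) by (apply incr_antitone; lia).
  assert (HnR : 1 <= INR n) by (apply (le_INR 1); lia).
  replace (S n) with (n + 1)%nat in * by lia. rewrite plus_INR. simpl (INR 1).
  assert (INR n * incr (n + 1) <= INR n * incr n) by (apply Rmult_le_compat_l; lra).
  unfold incr in *. nra.
Qed.

Lemma concave_chord n : (1 <= n <= m)%nat ->
  (INR m - INR n) * g 1%nat + (INR n - 1) * g m <= (INR m - 1) * g n.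
Proof.
  intros Hn. destruct (Nat.eq_dec n m) as [->|Hne]; [lra|].
  assert (Hup := growth_le_incr n (m - n) ltac:(lia) ltac:(lia)).
  replace (n + (m - n))%nat with m in Hup by lia. rewrite minus_INR in Hup by lia.
  assert (Hlow := growth_ge_incr n ltac:(lia) ltac:(lia)).
  assert (1 <= INR n) by (apply (le_INR 1); lia).
  assert (INR n + 1 <= INR m) by (rewrite <- S_INR; apply le_INR; lia).
  assert ((INR m - INR n) * ((INR n - 1) * incr n) <= (INR m - INR n) * (g n - g 1%nat))
    by (apply Rmult_le_compat_l; lra).
  assert ((INR n - 1) * (g m - g n) <= (INR n - 1) * ((INR m - INR n) * incr n))
    by (apply Rmult_le_compat_l; lra).
  nra.
Qed.

End Chord.

Section Isentropic.
Variables (m : nat) (d : jdist).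
Hypothesis Hnn : forall a, In a d -> 0 <= fst a.
Hypothesis Hsum : sumR (map fst d) = 1.
Hypothesis Hm : (2 <= m)%nat.
Hypothesis Hiso : isentropic m d.

Let g s := H m d (prefix s).

Lemma H_eq_card P : (0 < card m P)%nat -> H m d P = g (card m P).
Proof. intros HP. apply Hiso; [exact HP|]. rewrite card_prefix; [reflexivity|apply card_le]. Qed.

Lemma H_full : H m d (fun _ => true) = g m.
Proof. rewrite H_eq_card; rewrite card_true; [reflexivity|lia]. Qed.

(* Submodularity applied to [A = {0..s}] and [B = {0..s-1, s+1}]. *)
Lemma g_concave s : (1 <= s)%nat -> (s + 2 <= m)%nat ->
  g (s + 2)%nat + g s <= 2 * g (s + 1)%nat.
Proof.
  intros Hs Hsm.
  set (B := fun i => prefix s i || Nat.eqb i (s + 1)).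
  assert (HB : H m d B = g (s + 1)%nat).
  { assert (Hcard : card m B = (s + 1)%nat).
    { unfold B. rewrite card_orb_disjoint, card_prefix, card_eqb; [reflexivity|lia..|].
      intros i. unfold prefix. destruct (Nat.ltb_spec i s), (Nat.eqb_spec i (s + 1)); simpl; lia. }
    rewrite H_eq_card, Hcard; [reflexivity|lia]. }
  assert (Hsub := entropy_submodular m d Hnn Hsum (prefix (s + 1)) B (prefix (s + 2)) (prefix s)).
  rewrite HB in Hsub. unfold g. enough (H m d (prefix (s + 2)) + H m d (prefix s) <=
    H m d (prefix (s + 1)) + g (s + 1)%nat) by (unfold g in *; lra).
  apply Hsub; intros i; unfold B, prefix;
    destruct (Nat.ltb_spec i (s + 2)), (Nat.ltb_spec i (s + 1)), (Nat.ltb_spec i s),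
      (Nat.eqb_spec i (s + 1)); simpl; reflexivity || lia.
Qed.

Lemma sumR_H_cells_ge k c : is_partition m k c ->
  INR k * (INR m * g 1%nat - g m) + INR m * (g m - g 1%nat)
  <= (INR m - 1) * sumR (map (fun j => H m d (cell c j)) (seq 0 k)).
Proof.
  intros Hc.
  replace (INR k * (INR m * g 1%nat - g m) + INR m * (g m - g 1%nat)) with
    (sumR (map (fun j => (INR m - INR (card m (cell c j))) * g 1%nat
                        + (INR (card m (cell c j)) - 1) * g m) (seq 0 k))).
  2:{ rewrite sumR_map_add, sumR_map_mult_r, sumR_map_mult_r, !sumR_map_sub,
        !sumR_map_const, partition_card_sum, length_seq by exact Hc. ring. }
  rewrite <- sumR_map_mult_l. apply sumR_map_le. intros j Hj. rewrite in_seq in Hj.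
  assert (Hpos := card_cell_pos m k c j Hc ltac:(lia)).
  rewrite H_eq_card by exact Hpos.
  apply concave_chord; [exact g_concave|split; [lia|apply card_le]].
Qed.

Lemma Delta_singletons : Defs.Delta m d m (fun i => i) = (INR m * g 1%nat - g m) / (INR m - 1).
Proof.
  unfold Defs.Delta. rewrite minus_INR by lia.
  rewrite (sumR_map_ext _ _ (fun _ => g 1%nat)), sumR_map_const, length_seq.
  - rewrite H_full. reflexivity.
  - intros j Hj. rewrite in_seq in Hj. unfold cell.
    rewrite H_eq_card; rewrite card_eqb; [reflexivity|lia..].
Qed.

Lemma Delta_singletons_le k c : is_partition m k c -> (2 <= k)%nat ->
  Defs.Delta m d m (fun i => i) <= Defs.Delta m d k c.
Proof.
  intros Hc Hk. rewrite Delta_singletons. unfold Defs.Delta.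
  assert (Hcells := sumR_H_cells_ge k c Hc).
  rewrite H_full, minus_INR by lia.
  assert (1 < INR m) by (apply (lt_INR 1); lia).
  assert (1 < INR k) by (apply (lt_INR 1); lia).
  apply Rdiv_le_cross; simpl; nra.
Qed.

End Isentropic.

Theorem corollary1 (m : nat) (d : jdist) (hm : (2 <= m)%nat) (hd : valid d)
  (hiso : isentropic m d) : TypeS m d.
Proof.
  destruct hd as [Hnn Hsum]. rewrite Forall_forall in Hnn.
  intros k c Hc Hk. exact (Delta_singletons_le m d Hnn Hsum hm hiso k c Hc Hk).
Qed.
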